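(* Let $x_->x_+>0$ be real numbers and $\omega>0$. On $\mathbb{C}^4$ with orthonormal basis $\{|0\rangle,|1\rangle,|2\rangle,|3\rangle\}$ define the Hermitian operators $$X\coloneqq (x_--x_+)(|1\rangle\langle 2|+|2\rangle\langle 1|)+\sqrt{x_+x_-}\,(|0\rangle\langle 1|+|1\rangle\langle 0|+|2\rangle\langle 3|+|3\rangle\langle 2|),$$ $$Y\coloneqq -i(x_--x_+)(|1\rangle\langle 2|-|2\rangle\langle 1|)-i\sqrt{x_+x_-}\,(|0\rangle\langle 1|-|1\rangle\langle 0|+|2\rangle\langle 3|-|3\rangle\langle 2|),$$ and the Hamiltonian $H\coloneqq\omega\sum_{n=0}^3 n\,|n\rangle\langle n|$, with $X(t)\coloneqq e^{iHt}Xe^{-iHt}$, $Y(t)\coloneqq e^{iHt}Ye^{-iHt}$. Then: (i) the spectrum of $X$ is $\{-x_-,-x_+,x_+,x_-\}$; (ii) for all $t$, $X(t)=\cos(\omega t)X+\sin(\omega t)Y$ and $Y(t)=\cos(\omega t)Y-\sin(\omega t)X$; (iii) with $t_k\coloneqq 2\pi k/(3\omega)$ and $|\psi\rangle\coloneqq(|0\rangle-|3\rangle)/\sqrt2$, $$\frac13\sum_{k=0}^2\langle\psi|\Theta(X(t_k))|\psi\rangle=\big(1+x_+/x_-\big)^{-1}.$$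
   Context: For a Hermitian operator $A$ on a finite-dimensional Hilbert space, $\Theta(A)$ denotes the spectral function of $A$ with $\Theta(a)=1$ for $a>0$, $\Theta(a)=0$ for $a<0$, $\Theta(0)=1/2$; i.e. the projector onto the positive-eigenvalue eigenspace plus one half the projector onto the kernel. *)

From HB Require Import structures.
From mathcomp Require Import all_boot all_order all_algebra.
From mathcomp Require Import complex.
From mathcomp Require Import reals trigo.

Set Implicit Arguments.
Unset Strict Implicit.
Unset Printing Implicit Defensive.

Import Order.TTheory GRing.Theory Num.Theory.
Local Open Scope ring_scope.
Local Open Scope complex_scope.
Local Open Scope sesquilinear_scope.

Section Defs.
Variable R : realType.

(* Spectral (functional) calculus for a Hermitian matrix A, via the library
   spectral decomposition  A = M^-1 *m diag_mx d *m M  with M unitary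
   (so M^-1 = M^t* ) and d real:  f(A) := M^t* *m diag_mx (f d) *m M. *)
Definition mxfun n (f : R -> R[i]) (A : 'M[R[i]]_n) : 'M[R[i]]_n :=
  let M := spectralmx A in
  M ^t* *m diag_mx (\row_j f (@complex.Re R (spectral_diag A 0 j))) *m M.

Definition theta (a : R) : R[i] :=
  if 0 < a then 1 else if a == 0 then 2^-1 else 0.

Definition Theta n (A : 'M[R[i]]_n) : 'M[R[i]]_n := mxfun theta A.

Definition expi (s : R) : R[i] := (cos s) +i* (sin s).

Definition expiH n (s : R) (A : 'M[R[i]]_n) : 'M[R[i]]_n :=
  mxfun (fun l => expi (l * s)) A.

Definition kb (i j : nat) : 'M[R[i]]_4 := delta_mx (inord i) (inord j).

Definition ket (n : nat) : 'cV[R[i]]_4 := delta_mx (inord n) 0.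

Definition expect (psi : 'cV[R[i]]_4) (A : 'M[R[i]]_4) : R[i] :=
  (psi ^t* *m A *m psi) 0 0.

End Defs.

From HB Require Import structures.
From mathcomp Require Import all_boot all_order all_algebra.
From mathcomp Require Import complex.
From mathcomp Require Import reals trigo.
From mathcomp Require Import ring.

Set Implicit Arguments.
Unset Strict Implicit.
Unset Printing Implicit Defensive.

Import Order.TTheory GRing.Theory Num.Theory.
Local Open Scope ring_scope.
Local Open Scope complex_scope.
Local Open Scope sesquilinear_scope.

(* X = A + A^T and Y = i (A^T - A), where A is supported on the superdiagonal.
   Since H is diagonal with equally spaced levels, conjugation by e^{iHt}
   multiplies A by e^{-iwt} and A^T by e^{iwt}, which is (ii).  Writing
   x_+ = p^2 and x_- = m^2, X is diagonalised by an explicit real orthogonal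
   matrix with eigenvalues -m^2, -p^2, p^2, m^2, which is (i).  The spectral
   calculus commutes with unitary conjugation, and e^{-iHt_k} fixes psi because
   3 w t_k is a multiple of 2 pi; so every term of the average equals
   <psi|Theta(X)|psi>, which the explicit eigenvectors evaluate to
   m^2 / (m^2 + p^2). *)

Section PositiveReals.
Variable R : realType.

Lemma gt0_sqr_exists (x : R) : 0 < x -> exists2 p : R, 0 < p & x = p * p.
Proof.
by move=> x_gt0; exists (Num.sqrt x); rewrite ?sqrtr_gt0 // -expr2 sqr_sqrtr // ltW.
Qed.

Lemma inv_sqrtr_sqr (s : R) : 0 < s -> (Num.sqrt s)^-1 * (Num.sqrt s)^-1 * s = 1.
Proof.
move=> s_gt0; have sqrt_s0 : Num.sqrt s != 0 by rewrite gt_eqF // sqrtr_gt0.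
by rewrite -[X in _ * X](sqr_sqrtr (ltW s_gt0)); field.
Qed.

End PositiveReals.

Section ComplexExponential.
Variable R : realType.

Lemma expiE (s : R) : expi s = (cos s)%:C + 'i * (sin s)%:C.
Proof. by rewrite /expi -!complexr0; simpc. Qed.

Lemma expiD (a b : R) : expi a * expi b = expi (a + b).
Proof. by rewrite /expi; simpc; rewrite cosD sinD; congr (_ +i* _); ring. Qed.

Lemma expi0 : expi 0 = 1 :> R[i].
Proof. by rewrite /expi cos0 sin0. Qed.

Lemma conj_expi (s : R) : Num.conj (expi s) = expi (- s).
Proof. by rewrite /expi cosN sinN. Qed.

Lemma expiN_2pi_nat (k : nat) : expi (- (pi *+ 2 *+ k)) = 1 :> R[i].
Proof.
rewrite /expi cosN sinN -[pi *+ 2 *+ k]add0r.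
by rewrite (periodicn (@cosD2pi R)) (periodicn (@sinD2pi R)) cos0 sin0 oppr0.
Qed.

End ComplexExponential.

Lemma diag_mx_intertwine_map (F : idomainType) n (g : F -> F) (V : 'M[F]_n)
    (d e : 'rV[F]_n) :
  diag_mx d *m V = V *m diag_mx e ->
  diag_mx (\row_j g (d 0 j)) *m V = V *m diag_mx (\row_j g (e 0 j)).
Proof.
move=> /matrixP dV; apply/matrixP => i j; move: (dV i j).
rewrite !mul_diag_mx !mul_mx_diag !mxE.
have [->|nzV] := eqVneq (V i j) 0; first by rewrite !mulr0 !mul0r.
by rewrite [d 0 i * _]mulrC => /(mulfI nzV) ->; rewrite mulrC.
Qed.

Section Eigenvalues.
Variables (F : fieldType) (n : nat).

Lemma eigenvalue_similar (P D : 'M[F]_n) a :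
  P \in unitmx -> eigenvalue (invmx P *m D *m P) a = eigenvalue D a.
Proof.
move=> Pu; apply/eigenvalueP/eigenvalueP => [[v vA nz] | [v vD nz]].
- exists (v *m invmx P); first by rewrite scalemxAl -vA !mulmxA mulmxK.
  by apply: contraNneq nz => v0; rewrite -(mulmxKV Pu v) v0 mul0mx.
- exists (v *m P); first by rewrite !mulmxA mulmxK // vD scalemxAl.
  by apply: contraNneq nz => v0; rewrite -(mulmxK Pu v) v0 mul0mx.
Qed.

Lemma eigenvalue_diag_mx (d : 'rV[F]_n) a :
  eigenvalue (diag_mx d) a <-> exists j, a = d 0 j.
Proof.
split=> [/eigenvalueP [v vd nz] | [j ->]].
- have [j vj | v0] := pickP (fun j => v 0 j != 0); last first.
    by case/eqP: nz; apply/rowP => j; rewrite mxE; apply/eqP/negbFE/v0.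
  exists j; move/rowP: vd => /(_ j); rewrite mul_mx_diag !mxE.
  by rewrite [v 0 j * _]mulrC => /(mulIf vj).
- apply/eigenvalueP; exists (delta_mx 0 j).
    apply/rowP => k; rewrite mul_mx_diag !mxE.
    by have [->|_] := eqVneq k j; rewrite ?mulr1 ?mul1r ?mulr0 ?mul0r.
  by apply/eqP => /rowP /(_ j); rewrite !mxE !eqxx; apply/eqP; rewrite oner_eq0.
Qed.

End Eigenvalues.

Section SpectralCalculus.
Variable R : realType.
Local Notation C := R[i].

Lemma adjoint_real_mx k l (A : 'M[R]_(k, l)) :
  (map_mx (real_complex R) A)^t* = map_mx (real_complex R) A^T.
Proof. by apply/matrixP => i j; rewrite !mxE; apply: conjc_real. Qed.

Lemma mxfun_unitary n f (A U : 'M[C]_n) (d : 'rV[C]_n) :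
  U \is unitarymx -> A = U^t* *m diag_mx d *m U ->
  mxfun f A = U^t* *m diag_mx (\row_j f (complex.Re (d 0 j))) *m U.
Proof.
move=> Uu defA; rewrite /mxfun.
set M := spectralmx A; set e := spectral_diag A.
have Mu : M \is unitarymx := spectral_unitarymx A.
have /orthomx_spectralP : A \is normalmx.
  by apply/orthomx_spectral_subproof; exists (U, d); rewrite //= invmx_unitary.
rewrite -/M -/e invmx_unitary // => defA'.
pose V := M *m U^t*.
have MV : M = V *m U by rewrite /V mulmxKtV.
have VV : V^t* *m V = 1%:M.
  rewrite -[X in _ *m X]trmxCK; apply/unitarymxP.
  by rewrite trmxC_unitary mul_unitarymx ?trmxC_unitary.
have eV : diag_mx e *m V = V *m diag_mx d.
  have eM : diag_mx e *m M = M *m A by rewrite defA' !mulmxA (unitarymxP Mu) mul1mx.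
  by rewrite /V mulmxA eM defA -!mulmxA (unitarymxP Uu) mulmx1 !mulmxA.
clearbody V; have /= eVf := diag_mx_intertwine_map (fun z => f (complex.Re z)) eV.
rewrite MV trmx_mul map_mxM mulmxA -(mulmxA (U^t* *m V^t*)) eVf.
by rewrite !mulmxA -(mulmxA (U^t*) (V^t*)) VV mulmx1.
Qed.

Lemma mxfun_diag n f (r : 'I_n -> R) :
  mxfun f (diag_mx (\row_j (r j)%:C)) = diag_mx (\row_j f (r j)).
Proof.
have trC1 : (1%:M : 'M[C]_n)^t* = 1%:M by rewrite trmx1 map_mx1.
have U1 : (1%:M : 'M[C]_n) \is unitarymx by apply/unitarymxP; rewrite trC1 mulmx1.
rewrite (@mxfun_unitary _ _ _ 1%:M (\row_j (r j)%:C)) ?trC1 ?mul1mx ?mulmx1 //.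
by congr diag_mx; apply/rowP => j; rewrite !mxE.
Qed.

Lemma mxfun_conj_unitary n f (A U V : 'M[C]_n) (d : 'rV[C]_n) :
  U \is unitarymx -> V \is unitarymx -> A = U^t* *m diag_mx d *m U ->
  mxfun f (V^t* *m A *m V) = V^t* *m mxfun f A *m V.
Proof.
move=> Uu Vu defA; rewrite (mxfun_unitary f Uu defA).
rewrite (@mxfun_unitary _ _ _ (U *m V) d) ?mul_unitarymx //.
  by rewrite trmx_mul map_mxM !mulmxA.
by rewrite defA trmx_mul map_mxM !mulmxA.
Qed.

Lemma expect_conj (V M : 'M[C]_4) (psi : 'cV[C]_4) :
  expect psi (V^t* *m M *m V) = expect (V *m psi) M.
Proof. by rewrite /expect trmx_mul map_mxM !mulmxA. Qed.

End SpectralCalculus.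

Section OscillatorEvolution.
Variables (R : realType) (n : nat) (w : R).
Local Notation C := R[i].

Definition phase_row (t : R) : 'rV[C]_n := \row_j expi (w * (j : nat)%:R * t).

Lemma expiH_oscillator t :
  expiH t (diag_mx (\row_j (w * (j : nat)%:R)%:C)) = diag_mx (phase_row t).
Proof. exact: mxfun_diag. Qed.

Lemma phase_row_adjoint t : (diag_mx (phase_row t))^t* = diag_mx (phase_row (- t)).
Proof.
rewrite tr_diag_mx map_diag_mx; congr diag_mx; apply/rowP => j.
by rewrite !mxE; apply: etrans (conj_expi _) _; rewrite mulrN.
Qed.

Lemma phase_row_unitary t : diag_mx (phase_row t) \is unitarymx.
Proof.
apply/unitarymxP; rewrite phase_row_adjoint mulmx_diag -diag_const_mx.
by congr diag_mx; apply/rowP => j; rewrite !mxE expiD mulrN subrr expi0.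
Qed.

Section Superdiagonal.
Variable A : 'M[C]_n.
Hypothesis A_superdiag : forall i j : 'I_n, (j : nat) != i.+1 -> A i j = 0.

Lemma phase_conj_superdiag t :
  diag_mx (phase_row t) *m A *m diag_mx (phase_row (- t)) = expi (- (w * t)) *: A.
Proof.
apply/matrixP => i j; rewrite mul_mx_diag mul_diag_mx !mxE.
have [ji | /A_superdiag ->] := eqVneq (j : nat) i.+1; last by rewrite !mulr0 mul0r.
by rewrite mulrAC expiD ji -natr1; congr (expi _ * _); ring.
Qed.

Lemma phase_conj_subdiag t :
  diag_mx (phase_row t) *m A^T *m diag_mx (phase_row (- t)) = expi (w * t) *: A^T.
Proof.
have := congr1 trmx (phase_conj_superdiag (- t)).
by rewrite opprK !trmx_mul !tr_diag_mx mulmxA mulrN opprK linearZ.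
Qed.

Let mulii : 'i * 'i = -1 :> C. Proof. by rewrite -expr2 sqr_i. Qed.

Lemma phase_conj_superdiag_sym t :
  diag_mx (phase_row t) *m (A + A^T) *m diag_mx (phase_row (- t))
  = (cos (w * t))%:C *: (A + A^T) + (sin (w * t))%:C *: ('i *: (A^T - A)).
Proof.
rewrite mulmxDr mulmxDl phase_conj_superdiag phase_conj_subdiag.
by apply/matrixP => i j; rewrite !mxE !expiE cosN sinN rmorphN; ring.
Qed.

Lemma phase_conj_superdiag_skew t :
  diag_mx (phase_row t) *m ('i *: (A^T - A)) *m diag_mx (phase_row (- t))
  = (cos (w * t))%:C *: ('i *: (A^T - A)) - (sin (w * t))%:C *: (A + A^T).
Proof.
rewrite -scalemxAr -scalemxAl mulmxBr mulmxBl.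
rewrite phase_conj_superdiag phase_conj_subdiag.
by apply/matrixP => i j; rewrite !mxE !expiE cosN sinN rmorphN; ring: mulii.
Qed.

End Superdiagonal.
End OscillatorEvolution.

Lemma eq_inord4 (i : 'I_4) (b : nat) : (b < 4)%N -> (i == inord b) = (val i == b).
Proof. by move=> b4; rewrite -val_eqE /= inordK. Qed.

Ltac case_ord4 i := case: i => [[|[|[|[|?]]]] ?] //=.

Lemma kb_expansion_H (R : realType) (w : R) :
  \sum_(k < 4) (w * k%:R)%:C *: kb R k k = diag_mx (\row_j (w * (j : nat)%:R)%:C).
Proof.
by rewrite diag_mx_sum_delta; apply: eq_bigr => k _; rewrite /kb inord_val mxE.
Qed.

Section FourLevelExample.
(* p = sqrt x_+ and m = sqrt x_-; N normalises the eigenvectors of X. *)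
Variables (R : realType) (p m N : R).
Hypothesis normN : N * N * (2 * (m * m + p * p)) = 1.
Hypotheses (p_gt0 : 0 < p) (m_gt0 : 0 < m).
Local Notation C := R[i].
Local Notation cm := (map_mx (real_complex R)).

Definition Xamp (k : nat) : R :=
  match k with 0 | 2 => p * m | 1 => m * m - p * p | _ => 0 end.

Definition Xup : 'M[R]_4 := \matrix_(i, j) (if (j : nat) == i.+1 then Xamp i else 0).

Lemma Xup_superdiag (i j : 'I_4) : (j : nat) != i.+1 -> cm Xup i j = 0.
Proof. by rewrite !mxE => /negPf ->. Qed.

Lemma kb_expansion_X :
  (m * m - p * p)%:C *: (kb R 1 2 + kb R 2 1)
  + (p * m)%:C *: (kb R 0 1 + kb R 1 0 + kb R 2 3 + kb R 3 2) = cm Xup + (cm Xup)^T.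
Proof.
apply/matrixP => i j; rewrite !mxE !eq_inord4 //.
by case_ord4 i; case_ord4 j; ring.
Qed.

Lemma kb_expansion_Y :
  - ('i * (m * m - p * p)%:C) *: (kb R 1 2 - kb R 2 1)
  - ('i * (p * m)%:C) *: (kb R 0 1 - kb R 1 0 + kb R 2 3 - kb R 3 2)
  = 'i *: ((cm Xup)^T - cm Xup).
Proof.
apply/matrixP => i j; rewrite !mxE !eq_inord4 //.
by case_ord4 i; case_ord4 j; ring.
Qed.

Let normalize (a b : R) : a = b * (N * N * (2 * (m * m + p * p))) -> a = b.
Proof. by rewrite normN mulr1. Qed.

Definition Ueig : 'M[R]_4 := \matrix_(i, j) (N *
  match (i : nat), (j : nat) with
  | 0, 0 => p | 0, 1 => - m | 0, 2 => m | 0, _ => - p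
  | 1, 0 => m | 1, 1 => - p | 1, 2 => - p | 1, _ => m
  | 2, 0 => m | 2, 1 => p | 2, 2 => - p | 2, _ => - m
  | _, 0 => p | _, 1 => m | _, 2 => m | _, _ => p
  end).

Definition eigval : 'rV[R]_4 := \row_j
  (match (j : nat) with 0 => - (m * m) | 1 => - (p * p) | 2 => p * p | _ => m * m end).

Lemma Ueig_orthogonal : Ueig *m Ueig^T = 1%:M.
Proof.
apply/matrixP => i j; rewrite !mxE !big_ord_recl big_ord0 !mxE /bump /=.
by case_ord4 i; case_ord4 j; apply: normalize; ring.
Qed.

Lemma Xup_diagonalization : Xup + Xup^T = Ueig^T *m diag_mx eigval *m Ueig.
Proof.
rewrite mul_mx_diag; apply/matrixP => i j.
rewrite !mxE !big_ord_recl big_ord0 !mxE /bump /=.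
by case_ord4 i; case_ord4 j; apply/esym/normalize; ring.
Qed.

Lemma Ueig_unitary : cm Ueig \is unitarymx.
Proof.
by apply/unitarymxP; rewrite adjoint_real_mx -map_mxM Ueig_orthogonal map_mx1.
Qed.

Lemma X_diagonalization :
  cm Xup + (cm Xup)^T = (cm Ueig)^t* *m diag_mx (cm eigval) *m cm Ueig.
Proof.
by rewrite adjoint_real_mx map_trmx -map_mxD Xup_diagonalization !map_mxM map_diag_mx.
Qed.

Lemma X_eigenvalue a : eigenvalue (cm Xup + (cm Xup)^T) a <->
  a \in [:: (- (m * m))%:C; (- (p * p))%:C; (p * p)%:C; (m * m)%:C].
Proof.
rewrite X_diagonalization -(invmx_unitary Ueig_unitary).
rewrite eigenvalue_similar ?unitarymx_unit ?Ueig_unitary // eigenvalue_diag_mx.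
split=> [[j ->] | ]; first by case_ord4 j; rewrite !mxE !inE eqxx ?orbT.
rewrite !inE => /or4P [] /eqP ->;
  [exists (inord 0) | exists (inord 1) | exists (inord 2) | exists (inord 3)];
  by rewrite !mxE inordK.
Qed.

Definition psi : 'cV[C]_4 := ((Num.sqrt 2)^-1)%:C *: (ket R 0 - ket R 3).

Local Notation r := ((Num.sqrt 2)^-1 : R).

Definition psiR : 'cV[R]_4 := r *: (delta_mx (inord 0) 0 - delta_mx (inord 3) 0).

Lemma psi_real : psi = cm psiR.
Proof. by apply/matrixP => i j; rewrite !mxE rmorphM rmorphB !rmorph_nat. Qed.

Lemma phase_row_psi (w : R) (k : nat) :
  w != 0 -> diag_mx (phase_row 4 w (- (2 * pi * k%:R / (3 * w)))) *m psi = psi.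
Proof.
move=> w0; apply/colP => i; rewrite mul_diag_mx !mxE !eq_inord4 //.
have period : w * 3%:R * - (2 * pi * k%:R / (3 * w)) = - (pi *+ 2 *+ k).
  by rewrite -(mulr_natr (pi *+ 2) k) -(mulr_natr pi 2); field.
case_ord4 i; first by rewrite mulr0 mul0r expi0 mul1r.
- by rewrite subrr !mulr0.
- by rewrite subrr !mulr0.
- by rewrite period expiN_2pi_nat mul1r.
Qed.

Lemma theta_eigval :
  \row_j theta (complex.Re (cm eigval 0 j)) = cm (\row_j (1 < j)%N%:R).
Proof.
have theta_pos a : 0 < a -> theta a = 1%:C by rewrite /theta => ->.
have theta_neg a : a < 0 -> theta a = 0%:C.
  by rewrite /theta => a_lt0; rewrite ltNge (ltW a_lt0) lt_eqF.
apply/rowP => j; rewrite !mxE /=.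
by case_ord4 j; [apply: theta_neg | apply: theta_neg | apply: theta_pos | apply: theta_pos];
  rewrite ?oppr_lt0 mulr_gt0.
Qed.

Lemma Ueig_psi : Ueig *m psiR
  = \col_i (r * N * match (i : nat) with 0 => 2 * p | 2 => 2 * m | _ => 0 end).
Proof.
apply/colP => i; rewrite !mxE !big_ord_recl big_ord0 !mxE !eq_inord4 // /bump /=.
by case_ord4 i; ring.
Qed.

Lemma normalized_weightE : 2 * N * N * (m * m) = (1 + p * p / (m * m))^-1.
Proof.
have mm0 : m * m != 0 by rewrite gt_eqF // mulr_gt0.
have S0 : m * m + p * p != 0 by rewrite gt_eqF // addr_gt0 // mulr_gt0.
transitivity (m * m / (m * m + p * p) * (N * N * (2 * (m * m + p * p)))).
  by field.
by rewrite normN mulr1; field; rewrite S0 andbT gt_eqF.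
Qed.

Lemma expect_theta_X :
  expect psi (Theta (cm Xup + (cm Xup)^T)) = ((1 + p * p / (m * m))^-1)%:C.
Proof.
rewrite /Theta (mxfun_unitary _ Ueig_unitary X_diagonalization).
rewrite theta_eigval psi_real expect_conj -map_mxM Ueig_psi /expect.
rewrite adjoint_real_mx -map_diag_mx -!map_mxM mxE -normalized_weightE.
congr (_%:C); rewrite mul_mx_diag !mxE !big_ord_recl big_ord0 !mxE /bump /=.
transitivity (2 * N * N * (m * m) * (r * r * 2)); first by ring.
by rewrite inv_sqrtr_sqr // mulr1.
Qed.

Lemma expect_theta_evolved (w t : R) :
  diag_mx (phase_row 4 w (- t)) *m psi = psi ->
  expect psi (Theta (diag_mx (phase_row 4 w t) *m (cm Xup + (cm Xup)^T)
                       *m diag_mx (phase_row 4 w (- t))))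
  = ((1 + p * p / (m * m))^-1)%:C.
Proof.
move=> psi_fixed.
have -> : diag_mx (phase_row 4 w t) = (diag_mx (phase_row 4 w (- t)))^t*.
  by rewrite phase_row_adjoint opprK.
rewrite /Theta (mxfun_conj_unitary _ Ueig_unitary (phase_row_unitary _ _ _)
  X_diagonalization).
by rewrite expect_conj psi_fixed expect_theta_X.
Qed.

End FourLevelExample.

Theorem mainTheorem2 (R : realType) (xm xp w : R)
  (hxp : 0 < xp) (hxpm : xp < xm) (hw : 0 < w) :
  let c (r : R) : R[i] := r%:C in
  let X : 'M[R[i]]_4 :=
    c (xm - xp) *: (kb R 1 2 + kb R 2 1)
    + c (Num.sqrt (xp * xm)) *: (kb R 0 1 + kb R 1 0 + kb R 2 3 + kb R 3 2) in
  let Y : 'M[R[i]]_4 :=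
    - ('i * c (xm - xp)) *: (kb R 1 2 - kb R 2 1)
    - ('i * c (Num.sqrt (xp * xm))) *: (kb R 0 1 - kb R 1 0 + kb R 2 3 - kb R 3 2) in
  let H : 'M[R[i]]_4 := \sum_(n < 4) c (w * n%:R) *: kb R n n in
  let Xt (t : R) := expiH t H *m X *m expiH (- t) H in
  let Yt (t : R) := expiH t H *m Y *m expiH (- t) H in
  let tk (k : nat) : R := 2 * pi * k%:R / (3 * w) in
  let psi : 'cV[R[i]]_4 := c (Num.sqrt 2)^-1 *: (ket R 0 - ket R 3) in
  [/\ (forall a : R[i], eigenvalue X a <-> a \in [:: c (- xm); c (- xp); c xp; c xm]),
      (forall t : R, Xt t = c (cos (w * t)) *: X + c (sin (w * t)) *: Y
                  /\ Yt t = c (cos (w * t)) *: Y - c (sin (w * t)) *: X)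
    & 3%:R^-1 * (\sum_(k < 3) expect psi (Theta (Xt (tk k))))
        = (1 + c (xp / xm))^-1].
Proof.
have [p p_gt0 ->] := gt0_sqr_exists hxp.
have [m m_gt0 ->] := gt0_sqr_exists (lt_trans hxp hxpm).
pose N := (Num.sqrt (2 * (m * m + p * p)))^-1.
have normN : N * N * (2 * (m * m + p * p)) = 1.
  by rewrite inv_sqrtr_sqr // mulr_gt0 // addr_gt0 // mulr_gt0.
have sqrt_pm : Num.sqrt (p * p * (m * m)) = p * m.
  by rewrite mulrACA -expr2 sqrtr_sqr gtr0_norm ?mulr_gt0.
move=> c; rewrite /c sqrt_pm kb_expansion_X kb_expansion_Y kb_expansion_H.
have eU t : expiH t (diag_mx (\row_j (w * (j : nat)%:R)%:C)) = diag_mx (phase_row 4 w t).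
  exact: expiH_oscillator.
split.
- by move=> a; exact: (X_eigenvalue normN).
- move=> t; rewrite !eU.
  by rewrite phase_conj_superdiag_sym ?phase_conj_superdiag_skew //; exact: Xup_superdiag.
have mean3 (v : R[i]) : 3%:R^-1 * (v *+ 3) = v.
  by rewrite -(mulr_natl v) mulKf ?pnatr_eq0.
under eq_bigr => k _ do rewrite !eU (expect_theta_evolved normN p_gt0 m_gt0
  (phase_row_psi k (lt0r_neq0 hw))).
by rewrite sumr_const card_ord mean3 fmorphV rmorphD rmorph1.
Qed.
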